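(* Let $f\in C(I)$, the partition $\Delta$ and the sequence of base functions $b=\{b_r\}$ (with $b_r\in C(I)$, $b_r(x_0)=f(x_0)$, $b_r(x_N)=f(x_N)$, $\sup_r\|b_r\|_\infty<\infty$) be fixed, and fix $s\in[0,1)$. Let $B$ be the set of sequences $\alpha=\{\alpha_r\}_{r\in\mathbb{N}}$, $\alpha_r=(\alpha_{1,r},\dots,\alpha_{N,r})$, with $\alpha_{i,r}\in Lip_d(I)$ and $\|\alpha\|_\infty\le s$, equipped with the metric $\|\alpha-\beta\|_\infty=\sup_r\max_i\|\alpha_{i,r}-\beta_{i,r}\|_\infty$. Then the map $\mathcal{B}:B\to C(I)$, $\mathcal{B}(\alpha)=f^\alpha_{\Delta,b}$, is continuous (with respect to the supremum norm on $C(I)$).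
   Context: $I=[x_0,x_N]$ with partition $\Delta: x_0<x_1<\dots<x_N$, $I_i=[x_{i-1},x_i]$, $l_i:I\to I_i$ the affine bijection $l_i(x)=\frac{x_i-x_{i-1}}{x_N-x_0}x+\frac{x_Nx_{i-1}-x_0x_i}{x_N-x_0}$, $Q_i=l_i^{-1}$. $Lip_d(I)$ ($0<d\le1$): real functions $g$ on $I$ with $\sup_{x\ne y}|g(x)-g(y)|/|x-y|^d<\infty$. $\|\alpha\|_\infty:=\sup_r\max_i\|\alpha_{i,r}\|_\infty$. For $\alpha\in B$, $f^\alpha_{\Delta,b}$ (the non-stationary $\alpha$-fractal function) is the uniform limit, independent of $g\in C_f(I)=\{g\in C(I):g(x_0)=f(x_0),g(x_N)=f(x_N)\}$, of $T^{\alpha_1}\circ\cdots\circ T^{\alpha_r}g$, where $(T^{\alpha_r}g)(x)=f(x)+\alpha_{i,r}(Q_i(x))(g-b_r)(Q_i(x))$ for $x\in I_i$. *)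

From Stdlib Require Import Reals.
From Coquelicot Require Import Coquelicot.
Open Scope R_scope.

Definition is_partition (xs : nat -> R) (N : nat) : Prop :=
  (1 <= N)%nat /\ forall i, (i < N)%nat -> xs i < xs (S i).

Definition inI (xs : nat -> R) (N : nat) (x : R) : Prop := xs 0%nat <= x <= xs N.

Definition contI (xs : nat -> R) (N : nat) (g : R -> R) : Prop :=
  forall x, inI xs N x -> forall eps, 0 < eps -> exists delta, 0 < delta /\
    forall y, inI xs N y -> Rabs (y - x) < delta -> Rabs (g y - g x) < eps.

Definition LipI (xs : nat -> R) (N : nat) (d : R) (g : R -> R) : Prop :=
  exists L, forall x y, inI xs N x -> inI xs N y -> x <> y ->
    Rabs (g x - g y) <= L * Rpower (Rabs (x - y)) d.

Definition Qmap (xs : nat -> R) (N i : nat) (x : R) : R :=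
  xs 0%nat + (xs N - xs 0%nat) * (x - xs (i - 1)%nat) / (xs i - xs (i - 1)%nat).

(* A coefficient sequence: alpha i r is alpha_{i,r} (i in 1..N, r in nat). *)
Definition coeffs := nat -> nat -> R -> R.

(* (T^{alpha_r} g)(x) = f x + alpha_{i,r}(Q_i x) (g - b_r)(Q_i x) for x in I_i.
   Knots x_i (i>=1) are assigned to I_i (half-open pieces (x_{i-1}, x_i]);
   at x_0 the formula gives f x_0 in any case (g, b_r in C_f).  Outside I
   the value is irrelevant and set to f x. *)
Fixpoint Tsum (xs : nat -> R) (N : nat) (ar : nat -> R -> R) (br g : R -> R)
  (i : nat) (x : R) : R :=
  match i with
  | O => 0
  | S k => Tsum xs N ar br g k x +
      (if Rlt_le_dec (xs k) x then
         if Rle_dec x (xs (S k)) then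
           let q := Qmap xs N (S k) x in ar (S k) q * (g q - br q)
         else 0
       else 0)
  end.

Definition Top (xs : nat -> R) (N : nat) (f : R -> R) (alpha : coeffs)
  (b : nat -> R -> R) (r : nat) (g : R -> R) : R -> R :=
  fun x => f x + Tsum xs N (fun i => alpha i r) (b r) g N x.

(* Titer n g = T^{alpha_0} o T^{alpha_1} o ... o T^{alpha_(n-1)} g
   (sequences indexed from r = 0). *)
Fixpoint Titer (xs : nat -> R) (N : nat) (f : R -> R) (alpha : coeffs)
  (b : nat -> R -> R) (n : nat) (g : R -> R) : R -> R :=
  match n with
  | O => g
  | S m => Titer xs N f alpha b m (Top xs N f alpha b m g)
  end.

(* The non-stationary alpha-fractal function f^alpha_{Delta,b}: the limit of
   the iterates, computed with the starting function g = f (f is in C_f(I);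
   the limit is independent of g in the paper). *)
Definition fractal (xs : nat -> R) (N : nat) (f : R -> R) (alpha : coeffs)
  (b : nat -> R -> R) (x : R) : R :=
  real (Lim_seq (fun n => Titer xs N f alpha b n f x)).

Definition inB (xs : nat -> R) (N : nat) (d s : R) (alpha : coeffs) : Prop :=
  (forall r i, (1 <= i <= N)%nat -> LipI xs N d (alpha i r)) /\
  (forall r i x, (1 <= i <= N)%nat -> inI xs N x -> Rabs (alpha i r x) <= s).

(* Each operator T^{alpha_r} maps the ball of radius K = (F + M)/(1 - s) of
   bounded functions into itself (F bounds f, M bounds the b_r), and on that
   ball |T^alpha g - T^beta h| <= s |g - h| + |alpha - beta| (K + M).
   Iterating, the n-th iterates for alpha and beta differ by at most
   s^n |g - h| + |alpha - beta| (K + M) / (1 - s); with alpha = beta this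
   makes the iterates Cauchy, and passing to the limit gives
   |f^alpha - f^beta| <= |alpha - beta| (K + M) / (1 - s). *)

From Stdlib Require Import Reals Lra Lia.
From Coquelicot Require Import Coquelicot.
Open Scope R_scope.

Definition boundedI (xs : nat -> R) (N : nat) (g : R -> R) (K : R) : Prop :=
  forall y, inI xs N y -> Rabs (g y) <= K.

Definition coeffs_bounded (xs : nat -> R) (N : nat) (a : coeffs) (c : R) : Prop :=
  forall r i y, (1 <= i <= N)%nat -> inI xs N y -> Rabs (a i r y) <= c.

Lemma Rabs_sub_le a b c d : Rabs a <= c -> Rabs b <= d -> Rabs (a - b) <= c + d.
Proof.
  intros Ha Hb. unfold Rminus.
  eapply Rle_trans; [apply Rabs_triang|]. rewrite Rabs_Ropp. lra.
Qed.

Definition clamp (a c y : R) : R := Rmax a (Rmin y c).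

Lemma clamp_id a c y : a <= y <= c -> clamp a c y = y.
Proof.
  intros Hy. unfold clamp, Rmax, Rmin.
  destruct (Rle_dec y c); destruct (Rle_dec a _); lra.
Qed.

Lemma clamp_range a c y : a <= c -> a <= clamp a c y <= c.
Proof.
  intros Hac. unfold clamp, Rmax, Rmin.
  destruct (Rle_dec y c); destruct (Rle_dec a _); lra.
Qed.

Lemma clamp_dist a c y z : Rabs (clamp a c y - clamp a c z) <= Rabs (y - z).
Proof.
  unfold clamp, Rmax, Rmin.
  destruct (Rle_dec y c); destruct (Rle_dec z c);
    repeat match goal with |- context [Rle_dec ?u ?v] => destruct (Rle_dec u v) end;
    unfold Rabs; repeat destruct Rcase_abs; lra.
Qed.

Lemma invariant_radius s F M : 0 <= s < 1 -> 0 <= F -> 0 <= M ->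
  exists K, F <= K /\ F + s * (K + M) <= K.
Proof.
  intros Hs HF HM. exists ((F + M) / (1 - s)).
  assert (HK : (F + M) / (1 - s) * (1 - s) = F + M) by (field; lra).
  assert (0 <= (F + M) / (1 - s)) by (apply Rdiv_le_0_compat; lra).
  split; nra.
Qed.

Section Partition.

Variables (xs : nat -> R) (N : nat).
Hypothesis Hpart : is_partition xs N.

Lemma partition_le i j : (i <= j <= N)%nat -> xs i <= xs j.
Proof.
  destruct Hpart as [_ Hlt]. intros [Hij HjN].
  induction Hij; [lra|].
  specialize (IHHij ltac:(lia)). specialize (Hlt m ltac:(lia)). lra.
Qed.

Lemma inI_left : inI xs N (xs 0%nat).
Proof. split; [lra | apply partition_le; lia]. Qed.

Lemma boundedI_nonneg g c : boundedI xs N g c -> 0 <= c.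
Proof.
  intros Hg. eapply Rle_trans; [apply Rabs_pos | apply (Hg _ inI_left)].
Qed.

Lemma coeffs_bounded_nonneg a c : coeffs_bounded xs N a c -> 0 <= c.
Proof.
  intros Ha. destruct Hpart as [HN _].
  eapply Rle_trans; [apply Rabs_pos | apply (Ha 0%nat 1%nat _ ltac:(lia) inI_left)].
Qed.

(* Bounded on I because it coincides on I with the everywhere continuous
   function [f o clamp]. *)
Lemma contI_bounded f : contI xs N f -> exists F, boundedI xs N f F.
Proof.
  intros Hf.
  set (a := xs 0%nat). set (c := xs N).
  assert (Hac : a <= c) by (apply partition_le; lia).
  assert (Hcont : forall y, a <= y <= c ->
            filterlim (fun z => f (clamp a c z)) (locally y) (locally (f (clamp a c y)))).
  { intros y Hy. apply (continuity_pt_filterlim (fun z => f (clamp a c z))).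
    intros eps Heps. destruct (Hf y Hy eps Heps) as [dl [Hdl Hnear]].
    exists dl. split; [exact Hdl|]. intros z [_ Hz]. simpl in *. unfold R_dist in *.
    rewrite (clamp_id _ _ _ Hy).
    apply Hnear; [apply clamp_range; exact Hac|].
    pose proof (clamp_dist a c z y) as Hdist. rewrite (clamp_id _ _ _ Hy) in Hdist.
    lra. }
  destruct (bounded_continuity _ a c Hcont) as [F HF].
  exists F. intros y Hy. rewrite <- (clamp_id a c y Hy). left. exact (HF y Hy).
Qed.

Lemma Tsum_above ar br g k x :
  (k <= N)%nat -> xs k < x -> Tsum xs N ar br g k x = 0.
Proof.
  destruct Hpart as [_ Hlt]. revert x.
  induction k as [|k IHk]; intros x Hk Hx; simpl; [reflexivity|].
  rewrite IHk; [| lia | specialize (Hlt k ltac:(lia)); lra].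
  destruct (Rlt_le_dec (xs k) x); [destruct (Rle_dec x (xs (S k))); [lra|] |]; lra.
Qed.

Lemma Tsum_piece k x : (k <= N)%nat -> xs 0%nat <= x <= xs k ->
  (forall ar br g, Tsum xs N ar br g k x = 0) \/
  exists i, (1 <= i <= k)%nat /\ xs (i - 1)%nat < x <= xs i /\
    forall ar br g, Tsum xs N ar br g k x =
      ar i (Qmap xs N i x) * (g (Qmap xs N i x) - br (Qmap xs N i x)).
Proof.
  induction k as [|k IHk]; intros Hk Hx; [left; reflexivity|].
  destruct (Rle_lt_dec x (xs k)) as [Hle|Hlt].
  - assert (Hskip : forall ar br g, Tsum xs N ar br g (S k) x = Tsum xs N ar br g k x).
    { intros. simpl. destruct (Rlt_le_dec (xs k) x); [lra | ring]. }
    destruct (IHk ltac:(lia) ltac:(lra)) as [Hzero|[i [Hi [Hxi Hval]]]].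
    + left. intros. rewrite Hskip. apply Hzero.
    + right. exists i. split; [lia|]. split; [exact Hxi|].
      intros. rewrite Hskip. apply Hval.
  - right. exists (S k). replace (S k - 1)%nat with k by lia.
    split; [lia|]. split; [lra|]. intros. simpl.
    rewrite (Tsum_above ar br g k x ltac:(lia) Hlt).
    destruct (Rlt_le_dec (xs k) x); [|lra].
    destruct (Rle_dec x (xs (S k))); [ring | lra].
Qed.

Lemma Qmap_inI i x : (1 <= i <= N)%nat ->
  xs (i - 1)%nat < x <= xs i -> inI xs N (Qmap xs N i x).
Proof.
  intros Hi Hx. unfold inI, Qmap.
  assert (H0N : xs 0%nat <= xs N) by (apply partition_le; lia).
  set (a := xs (i - 1)%nat) in *. set (c := xs i) in *.
  set (t := (x - a) / (c - a)).
  assert (Ht : t * (c - a) = x - a) by (unfold t; field; lra).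
  assert (0 <= t <= 1) by nra.
  replace ((xs N - xs 0%nat) * (x - a) / (c - a)) with ((xs N - xs 0%nat) * t)
    by (unfold t, Rdiv; ring).
  nra.
Qed.

Lemma Tsum_local x : inI xs N x ->
  (forall ar br g, Tsum xs N ar br g N x = 0) \/
  exists i q, (1 <= i <= N)%nat /\ inI xs N q /\
    forall ar br g, Tsum xs N ar br g N x = ar i q * (g q - br q).
Proof.
  intros Hx. destruct (Tsum_piece N x (le_n N) Hx) as [Hzero|[i [Hi [Hxi Hval]]]].
  - left. exact Hzero.
  - right. exists i, (Qmap xs N i x). split; [lia|]. split.
    + apply Qmap_inI; [lia | exact Hxi].
    + exact Hval.
Qed.

Section Iteration.

Variables (f : R -> R) (b : nat -> R -> R) (s F M K : R).
Hypotheses (Hs : 0 <= s < 1) (Hf : boundedI xs N f F)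
  (Hb : forall r, boundedI xs N (b r) M)
  (HFK : F <= K) (HK : F + s * (K + M) <= K).

Lemma Top_bounded alpha r g :
  coeffs_bounded xs N alpha s -> boundedI xs N g K ->
  boundedI xs N (Top xs N f alpha b r g) K.
Proof.
  intros Ha Hg x Hx. unfold Top. pose proof (Hf x Hx).
  destruct (Tsum_local x Hx) as [Hzero|[i [q [Hi [Hq Hval]]]]].
  - rewrite Hzero, Rplus_0_r. lra.
  - rewrite Hval. eapply Rle_trans; [apply Rabs_triang|]. rewrite Rabs_mult.
    assert (Rabs (alpha i r q) * Rabs (g q - b r q) <= s * (K + M)).
    { apply Rmult_le_compat; try apply Rabs_pos.
      - exact (Ha r i q Hi Hq).
      - apply Rabs_sub_le; [apply Hg | apply Hb]; exact Hq. }
    lra.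
Qed.

Lemma Top_dist alpha beta r g h D dl :
  coeffs_bounded xs N alpha s ->
  coeffs_bounded xs N (fun i r y => alpha i r y - beta i r y) dl ->
  boundedI xs N (fun y => g y - h y) D -> boundedI xs N h K ->
  boundedI xs N (fun y => Top xs N f alpha b r g y - Top xs N f beta b r h y)
    (s * D + dl * (K + M)).
Proof.
  intros Ha Hab Hgh Hh x Hx. unfold Top.
  pose proof (boundedI_nonneg _ _ Hgh). pose proof (boundedI_nonneg _ _ Hh).
  pose proof (boundedI_nonneg _ _ (Hb r)). pose proof (coeffs_bounded_nonneg _ _ Hab).
  destruct (Tsum_local x Hx) as [Hzero|[i [q [Hi [Hq Hval]]]]].
  - rewrite !Hzero. replace (f x + 0 - (f x + 0)) with 0 by ring.
    rewrite Rabs_R0. apply Rplus_le_le_0_compat; apply Rmult_le_pos; lra.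
  - rewrite !Hval.
    replace (f x + alpha i r q * (g q - b r q) - (f x + beta i r q * (h q - b r q)))
      with (alpha i r q * (g q - h q) + (alpha i r q - beta i r q) * (h q - b r q))
      by ring.
    eapply Rle_trans; [apply Rabs_triang|]. rewrite !Rabs_mult.
    apply Rplus_le_compat; apply Rmult_le_compat; try apply Rabs_pos.
    + apply (Ha r i q Hi Hq).
    + apply (Hgh q Hq).
    + apply (Hab r i q Hi Hq).
    + apply Rabs_sub_le; [apply Hh | apply Hb]; exact Hq.
Qed.

Lemma Titer_dist alpha beta dl n g h D :
  coeffs_bounded xs N alpha s -> coeffs_bounded xs N beta s ->
  coeffs_bounded xs N (fun i r y => alpha i r y - beta i r y) dl ->
  boundedI xs N g K -> boundedI xs N h K -> boundedI xs N (fun y => g y - h y) D ->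
  boundedI xs N (fun y => Titer xs N f alpha b n g y - Titer xs N f beta b n h y)
    (s ^ n * D + dl * (K + M) * (1 - s ^ n) / (1 - s)).
Proof.
  intros Ha Hbe Hab. revert g h D.
  induction n as [|n IHn]; intros g h D Hg Hh Hgh x Hx; cbn [Titer].
  - replace (s ^ 0 * D + dl * (K + M) * (1 - s ^ 0) / (1 - s)) with D
      by (simpl; field; lra).
    exact (Hgh x Hx).
  - eapply Rle_trans.
    + apply (IHn _ _ (s * D + dl * (K + M))); [apply Top_bounded; auto ..
        | apply Top_dist; auto | exact Hx].
    + right. simpl. field. lra.
Qed.

Lemma Titer_shift alpha k n g :
  coeffs_bounded xs N alpha s -> boundedI xs N g K ->
  exists G, boundedI xs N G K /\
    forall x, Titer xs N f alpha b (n + k) g x = Titer xs N f alpha b n G x.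
Proof.
  intros Ha. revert g. induction k as [|k IHk]; intros g Hg.
  - exists g. split; [exact Hg|]. intros x. rewrite Nat.add_0_r. reflexivity.
  - destruct (IHk (Top xs N f alpha b (n + k) g)) as [G [HG Heq]].
    + apply Top_bounded; auto.
    + exists G. split; [exact HG|]. intros x. rewrite Nat.add_succ_r. apply Heq.
Qed.

Lemma Titer_cauchy alpha n k x :
  coeffs_bounded xs N alpha s -> inI xs N x ->
  Rabs (Titer xs N f alpha b (n + k) f x - Titer xs N f alpha b n f x)
    <= s ^ n * (K + K).
Proof.
  intros Ha Hx.
  assert (HfK : boundedI xs N f K) by (intros y Hy; pose proof (Hf y Hy); lra).
  destruct (Titer_shift alpha k n f Ha HfK) as [G [HG Heq]].
  rewrite Heq.
  assert (Hself : coeffs_bounded xs N (fun i r y => alpha i r y - alpha i r y) 0).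
  { intros r i y _ _. rewrite Rminus_diag, Rabs_R0. lra. }
  eapply Rle_trans.
  - apply (Titer_dist alpha alpha 0 n G f (K + K) Ha Ha Hself HG HfK); auto.
    intros y Hy. apply Rabs_sub_le; auto.
  - right. field. lra.
Qed.

Lemma Titer_cvg alpha x :
  coeffs_bounded xs N alpha s -> inI xs N x ->
  is_lim_seq (fun n => Titer xs N f alpha b n f x) (fractal xs N f alpha b x).
Proof.
  intros Ha Hx.
  assert (HK0 : 0 <= K) by (pose proof (boundedI_nonneg _ _ Hf); lra).
  assert (Hcv : ex_finite_lim_seq (fun n => Titer xs N f alpha b n f x)).
  { apply ex_lim_seq_cauchy_corr. intros eps.
    pose proof (cond_pos eps) as Heps.
    assert (Hy : 0 < eps / (K + K + 1)) by (apply Rdiv_lt_0_compat; lra).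
    destruct (pow_lt_1_zero s ltac:(rewrite Rabs_right; lra) _ Hy) as [n0 Hn0].
    assert (Hclose : forall n k, (n0 <= n)%nat ->
      Rabs (Titer xs N f alpha b (n + k) f x - Titer xs N f alpha b n f x) < eps).
    { intros n k Hn.
      eapply Rle_lt_trans; [apply Titer_cauchy; auto|].
      specialize (Hn0 n Hn). rewrite Rabs_right in Hn0 by (apply Rle_ge, pow_le; lra).
      apply Rle_lt_trans with (eps / (K + K + 1) * (K + K)).
      - apply Rmult_le_compat_r; lra.
      - apply (Rmult_lt_reg_r (K + K + 1)); [lra|].
        replace (eps / (K + K + 1) * (K + K) * (K + K + 1)) with (eps * (K + K))
          by (field; lra).
        nra. }
    exists n0. intros n m Hn Hm.
    destruct (Nat.le_ge_cases n m) as [Hnm|Hnm].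
    - replace m with (n + (m - n))%nat by lia. rewrite Rabs_minus_sym. auto.
    - replace n with (m + (n - m))%nat by lia. auto. }
  destruct Hcv as [l Hl]. unfold fractal.
  rewrite (is_lim_seq_unique _ _ Hl). exact Hl.
Qed.

Lemma fractal_dist alpha beta dl x :
  coeffs_bounded xs N alpha s -> coeffs_bounded xs N beta s ->
  coeffs_bounded xs N (fun i r y => alpha i r y - beta i r y) dl -> inI xs N x ->
  Rabs (fractal xs N f alpha b x - fractal xs N f beta b x) <= dl * (K + M) / (1 - s).
Proof.
  intros Ha Hbe Hab Hx.
  assert (HfK : boundedI xs N f K) by (intros y Hy; pose proof (Hf y Hy); lra).
  assert (Hc : 0 <= dl * (K + M)).
  { pose proof (coeffs_bounded_nonneg _ _ Hab). pose proof (boundedI_nonneg _ _ HfK).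
    pose proof (boundedI_nonneg _ _ (Hb 0%nat)). apply Rmult_le_pos; lra. }
  assert (Hn : forall n, Rabs (Titer xs N f alpha b n f x - Titer xs N f beta b n f x)
                         <= dl * (K + M) / (1 - s)).
  { intros n. eapply Rle_trans.
    - apply (Titer_dist alpha beta dl n f f 0); auto.
      intros y _. rewrite Rminus_diag, Rabs_R0. lra.
    - pose proof (pow_le s n ltac:(lra)).
      unfold Rdiv. rewrite Rmult_0_r, Rplus_0_l.
      apply Rmult_le_compat_r; [left; apply Rinv_0_lt_compat; lra | nra]. }
  refine (is_lim_seq_le _ (fun _ => dl * (K + M) / (1 - s))
            (Finite (Rabs _)) (Finite _) Hn _ (is_lim_seq_const _)).
  apply (is_lim_seq_abs _ (Finite _)), is_lim_seq_minus'; apply Titer_cvg; auto.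
Qed.

End Iteration.

End Partition.

Theorem mainTheorem11 (xs : nat -> R) (N : nat) (d s : R)
  (f : R -> R) (b : nat -> R -> R) :
  is_partition xs N ->
  0 < d <= 1 ->
  0 <= s < 1 ->
  contI xs N f ->
  (forall r, contI xs N (b r)) ->
  (forall r, b r (xs 0%nat) = f (xs 0%nat) /\ b r (xs N) = f (xs N)) ->
  (exists M, forall r x, inI xs N x -> Rabs (b r x) <= M) ->
  forall alpha : coeffs, inB xs N d s alpha ->
  forall eps, 0 < eps -> exists delta, 0 < delta /\
    forall beta : coeffs, inB xs N d s beta ->
      (forall r i x, (1 <= i <= N)%nat -> inI xs N x ->
         Rabs (alpha i r x - beta i r x) <= delta) ->
      forall x, inI xs N x ->
        Rabs (fractal xs N f alpha b x - fractal xs N f beta b x) <= eps.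
Proof.
  (* Only the bounds on f, on the b_r and on the coefficients matter. *)
  intros Hpart _ Hs Hf _ _ [M Hb] alpha [_ Ha] eps Heps.
  destruct (contI_bounded xs N Hpart f Hf) as [F HF].
  pose proof (boundedI_nonneg xs N Hpart _ _ HF) as HF0.
  pose proof (boundedI_nonneg xs N Hpart _ _ (Hb 0%nat)) as HM0.
  destruct (invariant_radius s F M Hs HF0 HM0) as [K [HFK HK]].
  exists (eps * (1 - s) / (K + M + 1)).
  split; [apply Rdiv_lt_0_compat; [apply Rmult_lt_0_compat|]; lra|].
  intros beta [_ Hbe] Hab x Hx.
  eapply Rle_trans;
    [exact (fractal_dist xs N Hpart f b s F M K Hs HF Hb HFK HK alpha beta _ x Ha Hbe Hab Hx)|].
  apply Rle_div_l; [lra|].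
  replace (eps * (1 - s) / (K + M + 1) * (K + M))
    with (eps * (1 - s) * ((K + M) / (K + M + 1))) by (field; lra).
  rewrite <- (Rmult_1_r (eps * (1 - s))) at 2.
  apply Rmult_le_compat_l; [apply Rmult_le_pos; lra|].
  apply (Rdiv_le_1 (K + M) (K + M + 1)); lra.
Qed.
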